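(* Let $f$ be a perfect coloring of $H(n,q)$ with quotient matrix $S$, and let $p$ be a positive integer. Then there exists a perfect coloring of $H(n,pq)$ with quotient matrix $pS+n(p-1)I$. In particular, if there is a $(b,c)$-coloring of $H(n,q)$, then there is a $(pb,pc)$-coloring of $H(n,pq)$.
   Context: The Hamming graph $H(n,q)$ has vertex set $\mathbb{Z}_q^n$, two vertices adjacent iff they differ in exactly one coordinate. A perfect $k$-coloring is a surjective map $f$ from the vertex set onto $\{1,\dots,k\}$ such that every vertex of color $i$ has exactly $s_{i,j}$ neighbours of color $j$ (constants depending only on $i,j$); $S=(s_{i,j})$ is the quotient matrix. $I$ is the identity matrix. A $(b,c)$-coloring of $H(n,q)$ is a perfect $2$-coloring with quotient matrix $\begin{pmatrix} n(q-1)-b & b\\ c & n(q-1)-c\end{pmatrix}$. *)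

From mathcomp Require Import all_boot all_algebra.
Set Implicit Arguments. Unset Strict Implicit. Unset Printing Implicit Defensive.

Definition hvert (n q : nat) := {ffun 'I_n -> 'I_q}.

Definition hadj (n q : nat) (x y : hvert n q) : bool :=
  #|[set i : 'I_n | x i != y i]| == 1%N.

Definition perfect_coloring (n q k : nat) (f : hvert n q -> 'I_k)
  (S : 'M[nat]_k) : Prop :=
  (forall c : 'I_k, exists x : hvert n q, f x = c) /\
  (forall (x : hvert n q) (j : 'I_k),
     #|[set y : hvert n q | hadj x y & f y == j]| = S (f x) j).

Definition mx2 (a b c d : nat) : 'M[nat]_2 :=
  \matrix_(i < 2, j < 2)
    if i == ord0 then (if j == ord0 then a else b)
    else (if j == ord0 then c else d).

Definition bc_coloring (n q b c : nat) (f : hvert n q -> 'I_2) : Prop :=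
  perfect_coloring f (mx2 (n * (q - 1) - b) b c (n * (q - 1) - c)).

From mathcomp Require Import all_boot all_algebra.
From mathcomp Require Import zify.
Set Implicit Arguments. Unset Strict Implicit. Unset Printing Implicit Defensive.

(* Let π : H(n,pq) -> H(n,q) reduce every coordinate modulo q.  Changing
   coordinate i of x to each of its pq - 1 other values, every neighbour of
   π(x) in direction i is hit exactly p times and π(x) itself p - 1 times.
   Hence f ∘ π is perfect: each entry of S is multiplied by p, and the n(p - 1)
   neighbours of x mapped onto π(x) add n(p - 1) to the diagonal. *)

Lemma ltn_ord_mod p q (v : 'I_(p * q)) : v %% q < q.
Proof. by case: q v => [|q] [m Hm] /=; [rewrite muln0 in Hm | rewrite ltn_mod]. Qed.

Definition ord_mod p q (v : 'I_(p * q)) : 'I_q := Ordinal (ltn_ord_mod v).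

Definition hmod n p q (x : hvert n (p * q)) : hvert n q :=
  [ffun i => ord_mod (x i)].

Definition hupd n r (x : hvert n r) (i : 'I_n) (v : 'I_r) : hvert n r :=
  [ffun j => if j == i then v else x j].

Lemma hupd_id n r (x : hvert n r) i : hupd x i (x i) = x.
Proof. by apply/ffunP=> j; rewrite ffunE; case: (j =P i) => [->|]. Qed.

Lemma hmod_hupd n p q (x : hvert n (p * q)) i v :
  hmod (hupd x i v) = hupd (hmod x) i (ord_mod v).
Proof. by apply/ffunP=> j; rewrite !ffunE; case: (j == i). Qed.

Lemma card_nat_sum (T : finType) (P : pred T) : #|[set t | P t]| = \sum_t P t.
Proof. by rewrite -sum1_card big_mkcond; apply: eq_bigr => t _; rewrite inE. Qed.

Lemma hadj_hupd n r (x : hvert n r) i v : hadj x (hupd x i v) = (v != x i).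
Proof.
rewrite /hadj; apply/cards1P/idP => [[j Hj]|Hv].
  have : j \in [set l | x l != hupd x i v l] by rewrite Hj set11.
  rewrite inE ffunE eq_sym; case: (j =P i) => [-> //|]; by rewrite eqxx.
exists i; apply/setP=> j; rewrite !inE ffunE.
by case: (j =P i) => [->|]; [rewrite eq_sym | rewrite eqxx].
Qed.

Lemma hadj_hupdP n r (x y : hvert n r) :
  hadj x y -> exists i, y = hupd x i (y i).
Proof.
move/cards1P=> [i Hi]; exists i; apply/ffunP=> j; rewrite ffunE.
case: (j =P i) => [-> //|ne_ji].
have : j \notin [set l | x l != y l] by rewrite Hi inE; apply/eqP.
by rewrite inE negbK => /eqP.
Qed.

Lemma card_hadj_pred n r (x : hvert n r) (P : pred (hvert n r)) :
  #|[set y | hadj x y & P y]| =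
  \sum_(i < n) #|[set v : 'I_r | (v != x i) && P (hupd x i v)]|.
Proof.
pose U := [set u : 'I_n * 'I_r | (u.2 != x u.1) && P (hupd x u.1 u.2)].
have -> : [set y | hadj x y & P y] = [set hupd x u.1 u.2 | u in U].
  apply/setP=> y; rewrite inE; apply/andP/imsetP => [[Hxy Py]|[[i v]]].
    have [i Hy] := hadj_hupdP Hxy.
    exists (i, y i) => //; rewrite inE /= -Hy Py andbT -hadj_hupd -Hy.
    exact: Hxy.
  by rewrite inE /= => /andP [Hv Pv] ->; rewrite hadj_hupd.
rewrite card_in_imset => [|[i v] [i' v']]; last first.
  rewrite !inE /= => /andP [Hv _] _ /(congr1 (fun z : hvert n r => z i)).
  rewrite !ffunE eqxx; case: (i =P i') => [<- -> //|_ Hvi].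
  by rewrite Hvi eqxx in Hv.
rewrite card_nat_sum -(pair_big xpredT xpredT
  (fun i v => ((v != x i) && P (hupd x i v) : nat))) /=.
by apply: eq_bigr => i _; rewrite card_nat_sum.
Qed.

Lemma card_hadj n r (x : hvert n r) : #|[set y | hadj x y]| = n * (r - 1).
Proof.
have -> : [set y | hadj x y] = [set y | hadj x y & predT y].
  by apply/setP=> y; rewrite !inE andbT.
rewrite (card_hadj_pred x predT) -[n in RHS]card_ord -sum_nat_const.
apply: eq_bigr => i _.
have -> : [set v | (v != x i) && predT (hupd x i v)] = [set~ x i].
  by apply/setP=> v; rewrite !inE andbT.
by rewrite cardsC1 card_ord subn1.
Qed.

Lemma sum_ord_modn p q (F : nat -> nat) :
  \sum_(v < p * q) F (v %% q) = p * \sum_(m < q) F m.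
Proof.
elim: p => [|p IHp]; first by rewrite mul0n big_ord0.
rewrite -!(big_mkord xpredT (fun v => F (v %% q))) in IHp *.
rewrite mulSnr (@big_cat_nat _ _ _ (p * q)) ?leq_addr //= IHp mulSnr.
rewrite -{1}(add0n (p * q)) big_addn addKn big_mkord; congr (_ + _).
by apply: eq_bigr => m _; rewrite addnC modnMDl modn_small.
Qed.

Lemma card_ord_mod_preim p q (P : pred 'I_q) :
  #|[set v : 'I_(p * q) | P (ord_mod v)]| = p * #|[set w | P w]|.
Proof.
pose F m := if insub m is Some w then P w : nat else 0.
have FE (w : 'I_q) : F w = P w by rewrite /F valK.
rewrite !card_nat_sum.
under eq_bigr => v _ do rewrite -FE.
by rewrite sum_ord_modn; congr (_ * _); apply: eq_bigr => w _; rewrite FE.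
Qed.

Lemma card_ord_mod_neq p q (u : 'I_(p * q)) (P : pred 'I_q) :
  #|[set v : 'I_(p * q) | (v != u) && P (ord_mod v)]| =
  p * #|[set w | (w != ord_mod u) && P w]| + P (ord_mod u) * (p - 1).
Proof.
have split_at (T : finType) (t : T) (Q : pred T) :
    #|[set s | Q s]| = Q t + #|[set s | (s != t) && Q s]|.
  rewrite (cardsD1 t) inE; congr (_ + _).
  by apply: eq_card => s; rewrite !inE andbC.
have := card_ord_mod_preim p P.
rewrite (split_at _ u) (split_at _ (ord_mod u) P).
set A := #|[set v | (v != u) && _]|; set B := #|[set w | (w != ord_mod u) && _]|.
case: (P (ord_mod u)) => /=; nia.
Qed.

Lemma perfect_coloring_hmod n q k p (f : hvert n q -> 'I_k) (S : 'M[nat]_k) :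
  perfect_coloring f S -> 0 < p ->
  perfect_coloring (fun x : hvert n (p * q) => f (hmod x))
    (\matrix_(i < k, j < k) (p * S i j + (i == j) * (n * (p - 1)))%N).
Proof.
move=> [f_surj f_count] p_gt0; split=> [c | x j].
  have [y <-] := f_surj c.
  exists [ffun i => widen_ord (leq_pmull q p_gt0) (y i)]; congr f.
  by apply/ffunP=> i; rewrite !ffunE; apply/val_inj; rewrite /= modn_small.
rewrite mxE (card_hadj_pred x (fun y => f (hmod y) == j)).
rewrite -f_count (card_hadj_pred (hmod x) (fun y => f y == j)) /=.
have card_coord i :
    #|[set v | (v != x i) && (f (hmod (hupd x i v)) == j)]| =
    p * #|[set w | (w != hmod x i) && (f (hupd (hmod x) i w) == j)]|
    + (f (hmod x) == j) * (p - 1).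
  have hmod_xi : hmod x i = ord_mod (x i) by rewrite ffunE.
  have -> : [set v | (v != x i) && (f (hmod (hupd x i v)) == j)] =
            [set v | (v != x i) && (f (hupd (hmod x) i (ord_mod v)) == j)].
    by apply/setP=> v; rewrite !inE hmod_hupd.
  by rewrite (card_ord_mod_neq _ (fun w => f (hupd (hmod x) i w) == j))
     -hmod_xi hupd_id.
under eq_bigr => i _ do rewrite card_coord.
by rewrite big_split /= -big_distrr sum_nat_const card_ord mulnCA.
Qed.

Lemma perfect_coloring_le_degree n q k (f : hvert n q -> 'I_k) (S : 'M[nat]_k)
    (a b : 'I_k) :
  perfect_coloring f S -> S a b <= n * (q - 1).
Proof.
move=> [f_surj f_count]; have [x <-] := f_surj a.
rewrite -(f_count x b) -(card_hadj x); apply: subset_leq_card.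
by apply/subsetP=> y; rewrite !inE => /andP [-> _].
Qed.

Lemma bc_coloring_quotient n q p b c (f : hvert n q -> 'I_2) :
  bc_coloring b c f ->
  (\matrix_(i < 2, j < 2)
     (p * mx2 (n * (q - 1) - b) b c (n * (q - 1) - c) i j
      + (i == j) * (n * (p - 1)))%N)%R
  = mx2 (n * (p * q - 1) - p * b) (p * b) (p * c) (n * (p * q - 1) - p * c).
Proof.
move=> f_bc.
have b_le := perfect_coloring_le_degree ord0 (lift ord0 ord0) f_bc.
have c_le := perfect_coloring_le_degree (lift ord0 ord0) ord0 f_bc.
rewrite !mxE /= in b_le c_le.
have degree_pq : n * (p * q - 1) = p * (n * (q - 1)) + n * (p - 1).
  (* Truncated subtraction: the identity needs q > 0, which any vertex
     x of H(n,q) with n > 0 provides. *)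
  case: (posnP n) => [-> | n_gt0]; first by rewrite !mul0n muln0.
  have [x _] := f_bc.1 ord0.
  have q_gt0 : 0 < q := leq_ltn_trans (leq0n _) (ltn_ord (x (Ordinal n_gt0))).
  by rewrite mulnCA -mulnDr; congr (n * _); nia.
have pb_le := leq_mul (leqnn p) b_le; have pc_le := leq_mul (leqnn p) c_le.
apply/matrixP => i j; rewrite !mxE degree_pq.
case: i => [[|[|//]] Hi]; case: j => [[|[|//]] Hj] /=;
  rewrite ?mul1n ?mul0n ?addn0 // mulnBr;
  (* the products become atoms, leaving truncated linear arithmetic *)
  move: (p * _) (p * b) (p * c) (n * (p - 1)) pb_le pc_le => *; lia.
Qed.

Theorem theorem5 :
  (forall (n q k p : nat) (f : hvert n q -> 'I_k) (S : 'M[nat]_k),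
     perfect_coloring f S -> 0 < p ->
     exists g : hvert n (p * q) -> 'I_k,
       perfect_coloring g
         (\matrix_(i < k, j < k) (p * S i j + (i == j) * (n * (p - 1)))%N))
  /\
  (forall (n q p b c : nat) (f : hvert n q -> 'I_2),
     bc_coloring b c f -> 0 < p ->
     exists g : hvert n (p * q) -> 'I_2, bc_coloring (p * b) (p * c) g).
Proof.
split=> [n q k p f S f_perfect p_gt0 | n q p b c f f_bc p_gt0].
  by exists (fun x => f (hmod x)); exact: perfect_coloring_hmod.
exists (fun x => f (hmod x)); rewrite /bc_coloring -(bc_coloring_quotient p f_bc).
exact: perfect_coloring_hmod.
Qed.
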